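(* Let $p\geq 3$ be prime and $k\geq 1$ an integer. Then $c_{\mathrm{poly}}(p^k)=k+1$ and $c_{\mathrm{poly}}(2p^k)=2(k+1)$.
   Context: $S(\mathbb{Z}_n)$ is the set of bijections $\mathbb{Z}_n\to\mathbb{Z}_n$, and $S_{\mathrm{poly}}(\mathbb{Z}_n)$ is the set of $\pi\in S(\mathbb{Z}_n)$ for which there is a polynomial $f\in\mathbb{Z}_n[x]$ with $\pi(x)=f(x)$ for all $x\in\mathbb{Z}_n$. $\mathrm{cyc}(\pi)$ is the number of cycles (including fixed points) of $\pi$. Define $c_{\mathrm{poly}}(n)=\min_{\pi\in S_{\mathrm{poly}}(\mathbb{Z}_n)}\max_{k\in\mathbb{Z}_n}\mathrm{cyc}(x\mapsto\pi(x+k))$. *)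

From HB Require Import structures.
From mathcomp Require Import all_boot all_order all_algebra all_fingroup.
From mathcomp Require Import boolp.
Set Implicit Arguments. Unset Strict Implicit. Unset Printing Implicit Defensive.
Import GRing.Theory.
Local Open Scope ring_scope.

(* Z_n is modelled by 'Z_n, which is Z/nZ for n >= 2 (all uses below have n >= 3). *)

Definition cyc (T : finType) (s : {perm T}) : nat := #|porbits s|.

Definition shiftp (n : nat) (k : 'Z_n) : {perm 'Z_n} :=
  perm (@addIr _ k).

Definition is_poly_perm (n : nat) (s : {perm 'Z_n}) : Prop :=
  exists f : {poly 'Z_n}, forall x : 'Z_n, s x = f.[x].

(* max_k cyc(x |-> pi(x + k)); note (shiftp k * s) x = s (x + k) by permM *)
Definition maxcyc (n : nat) (s : {perm 'Z_n}) : nat :=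
  (\max_(k : 'Z_n) cyc (shiftp k * s)%g)%N.

(* c_poly(n) = min over polynomial permutations of maxcyc.  The default value
   n of the fold is harmless: the identity is a polynomial permutation, and
   maxcyc is always <= #|'Z_n| = n for n >= 2. *)
Definition c_poly (n : nat) : nat :=
  (\big[minn/n]_(s : {perm 'Z_n} | `[< is_poly_perm s >]) maxcyc s)%N.

From mathcomp Require Import all_boot all_order all_algebra all_fingroup all_solvable.
From mathcomp Require Import boolp ring zify.
Set Implicit Arguments. Unset Strict Implicit. Unset Printing Implicit Defensive.
Import GRing.Theory.

(* Lower bound: a polynomial f satisfies (x - y) | (f x - f y).  Shifting a
   polynomial permutation so that it fixes 0, every iterate maps a divisor d of
   n to a multiple of d, so distinct divisors of n lie in distinct cycles; for
   n = c p^k with c in {1, 2} there are c (k + 1) of them.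
   Upper bound: take x |-> a x with a an odd primitive root modulo p^k.  Every
   shift x |-> a (x + s) moves some x0 by a multiple e of p^k which a fixes, so
   its iterates are x0 + z |-> x0 + a^m z + m e.  As a^m runs over all units
   modulo p^k, the c (k + 1) points x0 + p^j + q p^k (j <= k, q < c) meet
   every cycle. *)

Lemma horner_sub_factor (R : comNzRingType) (f : {poly R}) (x y : R) :
  exists q, (f.[x] - f.[y] = (x - y) * q)%R.
Proof.
have /factor_theorem [g Eg] : root (f - f.[y]%:P)%R y.
  by rewrite rootE hornerD hornerN hornerC subrr.
exists g.[x]%R; move/(congr1 (horner^~ x)): Eg.
by rewrite /= hornerM hornerXsubC hornerD hornerN hornerC mulrC.
Qed.

Lemma natr_eqmod (R : comNzRingType) (d u v : nat) : u = v %[mod d] ->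
  exists t : R, (u%:R = v%:R + d%:R * t)%R.
Proof.
move=> Euv; exists ((u %/ d)%:R - (v %/ d)%:R)%R.
rewrite {1}(divn_eq u d) {1}(divn_eq v d) Euv !natrD !natrM; ring.
Qed.

Lemma poly_perm_shift n (s : {perm 'Z_n}) (k : 'Z_n) :
  is_poly_perm s -> is_poly_perm (shiftp k * s)%g.
Proof.
case=> f Ef; exists (f \Po ('X + k%:P))%R => x.
by rewrite permM /shiftp permE Ef horner_comp hornerD hornerX hornerC.
Qed.

Lemma poly_perm_iter_sub_factor n (s : {perm 'Z_n}) (m : nat) (x y : 'Z_n) :
  is_poly_perm s -> exists q, ((s ^+ m)%g x - (s ^+ m)%g y = (x - y) * q)%R.
Proof.
case=> f Ef; rewrite !permX; elim: m => [|m [q Eq]] /=.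
  by exists 1%R; rewrite mulr1.
have [q' Eq'] := horner_sub_factor f (iter m s x) (iter m s y).
by exists (q * q')%R; rewrite !Ef Eq' Eq mulrA.
Qed.

Lemma cyc_le_card_cover (T I : finType) (s : {perm T}) (r : I -> T) :
  (forall x, exists i, x \in porbit s (r i)) -> cyc s <= #|I|.
Proof.
move=> cover; apply: leq_trans (leq_imset_card (fun i => porbit s (r i)) I).
apply/subset_leq_card/subsetP => _ /imsetP[x _ ->].
have [i] := cover x; rewrite -eq_porbit_mem => /eqP->.
exact: imset_f.
Qed.

Lemma dvdn_of_natr_mul N d n (t : 'Z_N) : 1 < N -> d %| N ->
  (n%:R = d%:R * t :> 'Z_N)%R -> d %| n.
Proof.
move=> N_gt1 dN /(congr1 (@nat_of_ord _)); rewrite -[t]natr_Zp -natrM !val_Zp_nat // => E.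
by rewrite /dvdn -(modn_dvdm n dN) E (modn_dvdm _ dN) modnMr.
Qed.

Section DivisorOrbits.

Variables (N : nat) (s : {perm 'Z_N}).
Hypotheses (N_gt1 : 1 < N) (s_poly : is_poly_perm s) (s_fix0 : s 0%R = 0%R).

Lemma porbit_natr_dvdn d d' : d' %| N -> (d%:R : 'Z_N)%R \in porbit s d'%:R%R -> d' %| d.
Proof.
move=> d'N /porbitP[i Ei].
have [q Eq] := poly_perm_iter_sub_factor i d'%:R%R 0%R s_poly.
apply: (dvdn_of_natr_mul N_gt1 d'N (t := q)).
have iter0 : (s ^+ i)%g 0%R = 0%R by rewrite permX iter_fix.
by move: Eq; rewrite iter0 !subr0 -Ei.
Qed.

Lemma size_divisors_le_cyc : size (divisors N) <= cyc s.
Proof.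
have N_gt0 : 0 < N by apply: ltnW.
have orbit_inj : {in divisors N &, injective (fun d => porbit s d%:R%R)}.
  move=> d d'; rewrite -!dvdn_divisors // => dN d'N E.
  apply/eqP; rewrite eqn_dvd.
  rewrite (porbit_natr_dvdn dN) ?E ?porbit_id //.
  by rewrite (porbit_natr_dvdn d'N) // -E porbit_id.
rewrite -(size_map (fun d => porbit s d%:R%R)) /cyc cardE.
apply: uniq_leq_size; first by rewrite map_inj_in_uniq ?divisors_uniq.
by move=> _ /mapP[d _ ->]; rewrite mem_enum imset_f.
Qed.

End DivisorOrbits.

Lemma size_divisors_le_maxcyc N (s : {perm 'Z_N}) :
  1 < N -> is_poly_perm s -> size (divisors N) <= maxcyc s.
Proof.
move=> N_gt1 s_poly; pose k0 := (s^-1)%g 0%R.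
apply: leq_trans (leq_bigmax (F := fun k => cyc (shiftp k * s)%g) k0).
apply: size_divisors_le_cyc => //; first exact: poly_perm_shift.
by rewrite permM /shiftp permE add0r permKV.
Qed.

Lemma size_divisors_le n : 0 < n -> size (divisors n) <= n.
Proof.
move=> n_gt0; rewrite -[leqRHS](size_iota 1).
apply: uniq_leq_size (divisors_uniq n) _ => d.
rewrite -dvdn_divisors // mem_iota add1n ltnS => dn.
by rewrite (dvdn_gt0 n_gt0 dn) dvdn_leq.
Qed.

Lemma c_poly_le_maxcyc N (s : {perm 'Z_N}) : is_poly_perm s -> c_poly N <= maxcyc s.
Proof.
move=> s_poly; rewrite /c_poly -minEnat -leEnat.
by apply: Order.TotalTheory.bigmin_le_cond; apply/asboolP.
Qed.

Lemma size_divisors_le_c_poly N : 1 < N -> size (divisors N) <= c_poly N.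
Proof.
move=> N_gt1; apply: (big_ind (fun m => size (divisors N) <= m)).
- exact/size_divisors_le/ltnW.
- by move=> m m' le_m le_m'; rewrite leq_min le_m le_m'.
- by move=> s /asboolP; apply: size_divisors_le_maxcyc.
Qed.

Lemma size_divisors_mul_pexp p c k : prime p -> coprime p c ->
  size (divisors c) * k.+1 <= size (divisors (c * p ^ k)).
Proof.
move=> p_pr p_coprime_c; have p_gt0 := prime_gt0 p_pr.
have c_gt0 : 0 < c.
  by case: c p_coprime_c; rewrite // /coprime gcdn0 => /eqP p1; rewrite p1 in p_pr.
have N_gt0 : 0 < c * p ^ k by rewrite muln_gt0 c_gt0 expn_gt0 p_gt0.
rewrite -(size_iota 0 k.+1) -(size_allpairs (fun d j => d * p ^ j)).
apply: uniq_leq_size.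
  apply: allpairs_uniq; [exact: divisors_uniq | exact: iota_uniq |].
  move=> _ _ /allpairsP[[d j] [dc _ ->]] /allpairsP[[d' j'] [d'c _ ->]] /= E.
  rewrite -!dvdn_divisors // in dc d'c.
  have Ej : j = j'.
    move/(congr1 (logn p)): E.
    by rewrite !logn_Gauss ?pfactorK // (coprime_dvdr _ p_coprime_c).
  move: E; rewrite Ej => /eqP; rewrite eqn_pmul2r ?expn_gt0 ?p_gt0 //.
  by move/eqP->.
move=> _ /allpairsP[[d j] [dc jk ->]] /=; rewrite -dvdn_divisors // dvdn_mul //.
  by rewrite dvdn_divisors.
by rewrite dvdn_exp2l // -ltnS; move: jk; rewrite mem_iota.
Qed.

Lemma iter_affine (R : comNzRingType) (g : R -> R) (A s x0 e : R) :
  (forall x, g x = A * (x + s))%R -> g x0 = (x0 + e)%R -> (A * e = e)%R ->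
  forall m z, iter m g (x0 + z)%R = (x0 + A ^+ m * z + e *+ m)%R.
Proof.
move=> gE gx0 Ae; elim=> [|m IHm] z /=; first by rewrite expr0 mul1r mulr0n addr0.
rewrite IHm gE.
have -> : (A * (x0 + A ^+ m * z + e *+ m + s) = A * (x0 + s) + A ^+ m.+1 * z + (A * e) *+ m)%R.
  by rewrite exprS; ring.
by rewrite -gE gx0 Ae mulrS; ring.
Qed.

Lemma pexp_coprime_factor_mod p k n : prime p ->
  exists j w, [/\ j <= k, coprime p w & n = w * p ^ j %[mod p ^ k]].
Proof.
move=> p_pr; have [Kn | nKn] := boolP (p ^ k %| n).
  by exists k, 1; rewrite coprimen1 mul1n modnn; split=> //; apply/eqP.
have n_gt0 : 0 < n by case: n nKn; rewrite ?dvdn0.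
have [w p_coprime_w nE] := pfactor_coprime p_pr n_gt0.
exists (logn p n), w; split; rewrite -?nE //.
rewrite leqNgt; apply: contra nKn => lt_k_log.
by apply: dvdn_trans (pfactor_dvdnn p n); rewrite dvdn_exp2l // ltnW.
Qed.

Lemma units_Zp_pexp_cyclic p k : prime p -> odd p -> 0 < k -> cyclic (units_Zp (p ^ k)).
Proof.
move=> p_pr p_odd k_gt0.
have K_gt1 : 1 < p ^ k by rewrite -(exp1n k) ltn_exp2r // prime_gt1.
pose x : 'Z_(p ^ k) := Zp1.
have ox : #[x]%g = p ^ k by rewrite /x order_Zp1 Zp_cast.
have pG : pgroup p <[x]>%G by rewrite /pgroup -orderE ox pnatX pnat_id.
have ntG : <[x]>%G :!=: 1%G by rewrite -cardG_gt1 /= -orderE ox.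
have cyclic_Aut : cyclic (Aut <[x]>).
  have [m [_ [_ cyclic_F _ _]]] := cyclic_pgroup_Aut_structure pG (cycle_cyclic x) ntG.
  case: eqP => [_ -> | _ [t [_ _ _]]] //.
  by rewrite p_odd => -[[]].
by rewrite -ox (isog_cyclic (Zp_unit_isog x)).
Qed.

Lemma odd_primitive_root_pexp p k : prime p -> odd p -> 0 < k ->
  exists2 a, odd a & forall w, coprime p w -> exists m, a ^ m = w %[mod p ^ k].
Proof.
move=> p_pr p_odd k_gt0; set K := p ^ k.
have K_gt1 : 1 < K by rewrite -(exp1n k) ltn_exp2r // prime_gt1.
have [g gen_g] := cyclicP (units_Zp_pexp_cyclic p_pr p_odd k_gt0).
set a0 := nat_of_ord (val g).
have a0_gen w : coprime p w -> exists m, a0 ^ m = w %[mod K].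
  move=> p_coprime_w.
  have Uw : (w%:R : 'Z_K)%R \is a GRing.unit by rewrite unitZpE // coprime_pexpl.
  have : FinRing.unit 'Z_K Uw \in <[g]>%g by rewrite -gen_g inE.
  case/cycleP=> m Em; exists m.
  have : (val g ^+ m = w%:R :> 'Z_K)%R by rewrite -FinRing.val_unitX -Em.
  by move/(congr1 (@nat_of_ord _)); rewrite -[val g]natr_Zp -natrX !val_Zp_nat.
exists (if odd a0 then a0 else a0 + K).
  by case: ifP => // /negbT; rewrite oddD oddX p_odd orbT; case: (odd a0).
move=> w /a0_gen[m Em]; exists m; rewrite -Em.
by case: ifP => // _; rewrite -modnXm modnDr modnXm.
Qed.

Lemma mul_pexp_gt1 p k c : prime p -> 0 < k -> 0 < c -> 1 < c * p ^ k.
Proof.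
move=> p_pr k_gt0 c_gt0; apply: leq_trans (leq_pmull _ c_gt0).
by rewrite -(exp1n k) ltn_exp2r // prime_gt1.
Qed.

Section MulPrimitiveRoot.

Variables (p k c a : nat).
Hypotheses (p_pr : prime p) (p_odd : odd p) (k_gt0 : 0 < k) (c_dvd2 : c %| 2).
Hypotheses (a_odd : odd a)
  (a_gen : forall w, coprime p w -> exists m, a ^ m = w %[mod p ^ k]).

Local Notation K := (p ^ k).
Local Notation N := (c * p ^ k).

Let c_gt0 : 0 < c. Proof. exact: dvdn_gt0 c_dvd2. Qed.
Let N_gt1 : 1 < N. Proof. exact: mul_pexp_gt1. Qed.
Let K_gt0 : 0 < K. Proof. by rewrite expn_gt0 prime_gt0. Qed.

Lemma primitive_root_mod_gt1 : 1 < a %% p.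
Proof.
have p_gt2 := odd_prime_gt2 p_odd p_pr.
have [m Em] := a_gen (coprimenP (prime_gt0 p_pr)).
have {Em} : (a %% p) ^ m %% p = p.-1.
  rewrite modnXm -(modn_dvdm _ (dvdn_exp k_gt0 (dvdnn p))) Em.
  by rewrite (modn_dvdm _ (dvdn_exp k_gt0 (dvdnn p))) modn_small // ltn_predL prime_gt0.
case: (a %% p) => [|[|r]] //.
  by case: m => [|m]; rewrite ?expn0 ?exp0n ?mod0n ?modn_small //; lia.
by rewrite exp1n modn_small //; lia.
Qed.

Let a_gt0 : 0 < a. Proof. by case: a a_odd. Qed.

Let N_coprime_a : coprime N a.
Proof.
have p_coprime_a : coprime p a.
  by rewrite prime_coprime // /dvdn -lt0n (leq_trans _ primitive_root_mod_gt1).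
rewrite coprimeMl coprime_pexpl // p_coprime_a andbT.
by apply: coprime_dvdl c_dvd2 _; rewrite coprime2n.
Qed.

Let K_coprime_preda : coprime K a.-1.
Proof.
rewrite coprime_pexpl // prime_coprime // -subn1 -eqn_mod_dvd //.
by rewrite (modn_small (prime_gt1 p_pr)) neq_ltn primitive_root_mod_gt1 orbT.
Qed.

Local Open Scope ring_scope.

Local Notation A := (a%:R : 'Z_N).

Let A_unit : A \is a GRing.unit. Proof. by rewrite unitZpE. Qed.

Definition mul_root_perm : {perm 'Z_N} := perm (mulrI A_unit).

Lemma mul_root_poly_perm : is_poly_perm mul_root_perm.
Proof. by exists (A%:P * 'X) => x; rewrite permE hornerMX hornerC. Qed.

(* a ^ m - 1 is even and N divides 2 K. *)
Lemma mul_root_fixes_multiples m t : A ^+ m * (K%:R * t) = K%:R * t.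
Proof.
have N_dvd : (N %| (a ^ m).-1 * K)%N.
  rewrite dvdn_pmul2r // (dvdn_trans c_dvd2) // dvdn2 -subn1 oddB ?expn_gt0 ?a_gt0 //.
  by rewrite oddX a_odd orbT.
have vanish : ((a ^ m).-1 * K)%:R = 0 :> 'Z_N.
  by rewrite -(divnK N_dvd) natrM pchar_Zp // mulr0.
have am_gt0 : (0 < a ^ m)%N by rewrite expn_gt0 a_gt0.
by rewrite -natrX -(prednK am_gt0) -natr1 mulrA mulrDl -natrM vanish mul1r add0r.
Qed.

Lemma mul_root_drift_point (s : 'Z_N) : exists x0 t, A * (x0 + s) = x0 + K%:R * t.
Proof.
have [b _] := Bezoutl a.-1 K_gt0; rewrite (eqP K_coprime_preda) => /dvdnP[q Ebq].
exists (b%:R * (A * s)), (q%:R * (A * s)).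
have EKq : K%:R * q%:R = 1 + b%:R * (a.-1)%:R :> 'Z_N.
  by rewrite -natrM [(K * q)%N]mulnC -Ebq natrD natrM.
have EA : A = (a.-1)%:R + 1 by rewrite natr1 prednK.
by rewrite [K%:R * _]mulrA EKq EA; ring.
Qed.

Lemma mulK_modc (u : 'Z_N) : K%:R * u = K%:R * ((u : nat) %% c)%:R.
Proof.
rewrite -{1}[u]natr_Zp {1}(divn_eq u c) natrD mulrDr.
have -> : K%:R * ((u %/ c)%N * c)%:R = (u %/ c)%:R * N%:R :> 'Z_N.
  by rewrite !natrM; ring.
by rewrite pchar_Zp // mulr0 add0r.
Qed.

Lemma mul_root_shift_cover (s x0 t y : 'Z_N) : A * (x0 + s) = x0 + K%:R * t ->
  exists i : 'I_c * 'I_k.+1,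
    y \in porbit (shiftp s * mul_root_perm)%g (x0 + (p ^ i.2)%:R + K%:R * i.1%:R).
Proof.
move=> drift; set g := (shiftp s * mul_root_perm)%g.
have gE x : g x = A * (x + s) by rewrite permM /shiftp !permE.
have AKt : A * (K%:R * t) = K%:R * t by rewrite -[A]expr1 mul_root_fixes_multiples.
have iterE := iter_affine gE (etrans (gE x0) drift) AKt.
have [j [w [le_jk p_coprime_w vE]]] := pexp_coprime_factor_mod k (y - x0)%R p_pr.
have [m Em] := a_gen p_coprime_w.
have [u Eu] : exists u, (nat_of_ord (y - x0)%R)%:R = (a ^ m * p ^ j)%N%:R + K%:R * u :> 'Z_N.
  by apply: natr_eqmod; rewrite vE -modnMml -Em modnMml.
have lt_q : (nat_of_ord (u - t *+ m)%R %% c < c)%N by rewrite ltn_pmod.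
exists (Ordinal lt_q, Ordinal (le_jk : (j < k.+1)%N)); apply/porbitP; exists m.
rewrite permX -addrA iterE mulrDr mul_root_fixes_multiples -mulK_modc.
by rewrite -[y](subrK x0) -[y - x0]natr_Zp Eu natrM natrX; ring.
Qed.

Lemma shift_mul_root_cyc (s : 'Z_N) : (cyc (shiftp s * mul_root_perm)%g <= c * k.+1)%N.
Proof.
have [x0 [t drift]] := mul_root_drift_point s.
apply: leq_trans (cyc_le_card_cover (fun y => mul_root_shift_cover y drift)) _.
by rewrite card_prod !card_ord.
Qed.

Lemma mul_root_maxcyc : (maxcyc mul_root_perm <= c * k.+1)%N.
Proof. by apply/bigmax_leqP => s _; apply: shift_mul_root_cyc. Qed.

End MulPrimitiveRoot.

Lemma c_poly_mul_pexp p k c : prime p -> odd p -> 0 < k -> c %| 2 ->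
  c_poly (c * p ^ k) = c * k.+1.
Proof.
move=> p_pr p_odd k_gt0 c_dvd2.
have [a a_odd a_gen] := odd_primitive_root_pexp p_pr p_odd k_gt0.
apply/eqP; rewrite eqn_leq; apply/andP; split.
  have s_poly := mul_root_poly_perm p_pr p_odd k_gt0 c_dvd2 a_odd a_gen.
  exact: leq_trans (c_poly_le_maxcyc s_poly) (mul_root_maxcyc _ _ _ _ _ _).
have size_divisors_c : size (divisors c) = c.
  have divisors2 : divisors 2 = [:: 1; 2] by [].
  by move: c_dvd2; rewrite dvdn_divisors // divisors2 !inE => /orP[] /eqP->.
have p_coprime_c : coprime p c by apply: coprime_dvdr c_dvd2 _; rewrite coprimen2.
rewrite -{1}size_divisors_c.
apply: leq_trans (size_divisors_mul_pexp k p_pr p_coprime_c) _.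
exact/size_divisors_le_c_poly/mul_pexp_gt1/(dvdn_gt0 _ c_dvd2).
Qed.

Theorem corollary5p4 (p k : nat) :
  prime p -> 3 <= p -> 1 <= k ->
  c_poly (p ^ k) = k.+1 /\ c_poly (2 * p ^ k) = 2 * k.+1.
Proof.
move=> p_pr p_ge3 k_gt0.
have p_odd : odd p by case: (even_prime p_pr) p_ge3 => [->|] //.
split; last exact: c_poly_mul_pexp.
by rewrite -[p ^ k]mul1n c_poly_mul_pexp ?mul1n.
Qed.
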